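(* Let $A$ be an associative (not necessarily unital) algebra over a field satisfying the identity $x_1\cdots x_n=x_{\sigma(1)}\cdots x_{\sigma(n)}$ for some $\sigma\in S_n$, and write $i=\sigma(1)$, $j=\sigma(n)$, where $i\ne 1$ and $j\ne n$. Then $H_{n+2}$ contains all permutations of $\{1,2,\ldots,i+1\}$ and all permutations of $\{j+1,\ldots,n+2\}$ (regarded as elements of $S_{n+2}$ fixing the remaining letters).
   Context: For each $k$, $H_k\subseteq S_k$ is the set of permutations $\tau$ such that $A$ satisfies $x_1\cdots x_k=x_{\tau(1)}\cdots x_{\tau(k)}$ (i.e. $a_1\cdots a_k=a_{\tau(1)}\cdots a_{\tau(k)}$ for all $a_1,\dots,a_k\in A$). *)

From mathcomp Require Import all_boot all_fingroup all_algebra.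
Set Implicit Arguments. Unset Strict Implicit. Unset Printing Implicit Defensive.
Import GRing.Theory.
Local Open Scope ring_scope.

(* A (not necessarily unital) associative algebra over a field K is
   encoded as a K-vector space A (lmodType K) with a bilinear associative
   multiplication mul : A -> A -> A. *)
Definition assoc_algebra (K : fieldType) (A : lmodType K) (mul : A -> A -> A) :=
  [/\ (forall x y z, mul x (mul y z) = mul (mul x y) z),
      (forall (c : K) x y z, mul (c *: x + y) z = c *: mul x z + mul y z)
    & (forall (c : K) x y z, mul x (c *: y + z) = c *: mul x y + mul x z)].

(* The empty word (k = 0)
   never occurs in the statement; it is given the value 0 arbitrarily. *)
Definition word (K : fieldType) (A : lmodType K) (mul : A -> A -> A) (s : seq A) : A :=
  if s is x :: s' then foldl mul x s' else 0.

(* A satisfies x_1...x_k = x_{tau(1)}...x_{tau(k)}; letters are indexed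
   0..k-1 (i.e. the letter m corresponds to m.+1 in the paper). *)
Definition satisfies_perm (K : fieldType) (A : lmodType K) (mul : A -> A -> A)
    (k : nat) (tau : 'S_k) : Prop :=
  forall a : 'I_k -> A,
    word mul [seq a m | m <- enum 'I_k] = word mul [seq a (tau m) | m <- enum 'I_k].

Definition in_H (K : fieldType) (A : lmodType K) (mul : A -> A -> A) (k : nat)
  (tau : 'S_k) : Prop := satisfies_perm mul tau.

From mathcomp Require Import all_boot all_fingroup all_algebra.
From mathcomp Require Import zify.
Set Implicit Arguments. Unset Strict Implicit. Unset Printing Implicit Defensive.

(* Let k = sigma(1) - 1, the 0-based position of the paper's letter i.
   Substituting z x_i for x_i in x_1...x_n = x_sigma(1)...x_sigma(n) brings z
   to the front of the right-hand side: in a word of length n, a left factor of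
   the letter at position k can be pulled out to the front.  After merging two
   adjacent letters, this lets the first letter of a word of length n + 2 jump
   to position k or to position k + 1 (at least one letter follows, as k < n).
   The second jump rotates the first k + 2 letters, the two jumps together
   transpose the letters at positions k and k + 1, and these two permutations
   generate all permutations of the first k + 2 = i + 1 letters.  The claim for
   {j+1, ..., n+2} is the same claim for the opposite algebra, whose words are
   the reversed words. *)

Definition swap_invariant (T R : Type) (f : seq T -> R) (m : nat) :=
  forall t a b s, size (t ++ a :: b :: s) = m ->
    f (t ++ a :: b :: s) = f (t ++ b :: a :: s).

Section SwapInvariance.
Variables (T : eqType) (R : Type) (f : seq T -> R) (m : nat).

Lemma swap_invariant_rot :
  (forall x s, size s = m.+1 -> f (x :: s) = f (rcons s x)) ->
  (forall t a b, size t = m -> f (t ++ [:: a; b]) = f (t ++ [:: b; a])) ->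
  swap_invariant f m.+2.
Proof.
move=> f_rot f_swap_last.
have f_catC u w : size (u ++ w) = m.+2 -> f (u ++ w) = f (w ++ u).
  elim: u w => [|x u IH] w; first by rewrite cats0.
  move=> size_m; rewrite cat_cons f_rot; last by case: size_m.
  rewrite rcons_cat IH ?cat_rcons //.
  by move: size_m; rewrite !size_cat size_rcons /=; lia.
move=> t a b s size_m.
(* Rotating the block t ++ [:: a; b] to the end turns the swap into the last one. *)
have size_ab c d : size ((t ++ [:: c; d]) ++ s) = m.+2.
  by move: size_m; rewrite !size_cat /=; lia.
rewrite -[t ++ a :: _]/(t ++ [:: a; b] ++ s) -[t ++ b :: _]/(t ++ [:: b; a] ++ s).
rewrite !catA !(f_catC (_ ++ _) s) // !catA f_swap_last //.
by move: size_m; rewrite !size_cat /=; lia.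
Qed.

Hypothesis f_swap : swap_invariant f m.

Lemma swap_invariant_move_front p v x s :
  size (p ++ v ++ x :: s) = m -> f (p ++ v ++ x :: s) = f (p ++ x :: v ++ s).
Proof.
elim: v p => [|y v IH] p //= size_m.
rewrite -cat_rcons IH; last by rewrite cat_rcons.
by rewrite cat_rcons f_swap //; move: size_m; rewrite !size_cat /= !size_cat /=; lia.
Qed.

Lemma swap_invariant_perm u v : perm_eq u v -> size u = m -> f u = f v.
Proof.
rewrite -[f u]/(f ([::] ++ u)) -[f v]/(f ([::] ++ v)).
rewrite -[size u]/(size ([::] ++ u)); elim: u [::] v => [|x u IH] p v.
  by rewrite perm_sym => /perm_nilP ->.
move=> uv size_m; have x_v : x \in v by rewrite -(perm_mem uv) mem_head.
case/splitPr: x_v uv => v1 v2 uv.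
have {}uv : perm_eq u (v1 ++ v2).
  by rewrite -(perm_cons x) (perm_trans uv) // -cat1s perm_catCA.
rewrite swap_invariant_move_front; last first.
  by move: size_m; rewrite !size_cat /= (perm_size uv) size_cat; lia.
by rewrite -!cat_rcons; apply: IH; rewrite // cat_rcons.
Qed.

End SwapInvariance.

Lemma opp_associative (T : Type) (op : T -> T -> T) :
  associative op -> associative (fun x y => op y x).
Proof. by move=> opA x y z; rewrite opA. Qed.

Section Words.
Variables (K : fieldType) (A : lmodType K) (mul : A -> A -> A).
Hypothesis mulA : associative mul.
Local Notation word := (word mul).

Lemma word_cons_mul z x s : word (mul z x :: s) = mul z (word (x :: s)).
Proof. by elim: s x => [|y s IH] x //=; rewrite -mulA -IH. Qed.

Lemma word_merge p x y s : word (p ++ mul x y :: s) = word (p ++ x :: y :: s).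
Proof. by case: p => [|z p] //=; rewrite !foldl_cat /= mulA. Qed.

Definition extracts_left_factor (n k : nat) :=
  forall p c q z, size p = k -> size (p ++ c :: q) = n ->
    word (p ++ mul z c :: q) = mul z (word (p ++ c :: q)).

Section ExtractLeftFactor.
Variables (n k : nat).
Hypotheses (k_gt0 : (0 < k)%N) (k_lt_n : (k < n)%N).
Hypothesis extract : extracts_left_factor n k.

Lemma word_jump p z c q : size p = k -> size (p ++ c :: q) = n ->
  word (p ++ z :: c :: q) = word (z :: p ++ c :: q).
Proof.
move=> size_p size_n; rewrite -word_merge extract //.
case: p size_p {size_n} => [|x p] size_p; first by move: k_gt0; rewrite -size_p.
by rewrite -word_cons_mul.
Qed.

Lemma word_jump_k a t b r : size t = k -> size r = (n - k)%N ->
  word (a :: t ++ b :: r) = word (t ++ a :: b :: r).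
Proof.
case: r => [|c r] size_t size_r; first by move: size_r k_lt_n => /=; lia.
rewrite -[t ++ a :: _]cat_rcons -(word_merge (rcons t a)) cat_rcons word_jump //.
  by rewrite -(word_merge (a :: t)).
by rewrite size_cat /= size_t; move: size_r => /=; lia.
Qed.

Lemma word_jump_k1 a ys r : size ys = k.+1 -> size r = (n - k)%N ->
  word (a :: ys ++ r) = word (ys ++ a :: r).
Proof.
case: r => [|c r] size_ys size_r; first by move: size_r k_lt_n => /=; lia.
case: ys size_ys => [|x [|y ys]] //= size_ys; first by move: size_ys k_gt0 => [<-].
rewrite -[LHS](word_merge [:: a]) -[RHS]/(word (mul x y :: ys ++ a :: c :: r)).
rewrite (word_jump (p := mul x y :: ys)) //; first by case: size_ys.
by rewrite size_cat /=; move: size_ys size_r => [] /= -> ->; lia.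
Qed.

Lemma word_perm_prefix u v r : perm_eq u v -> size u = k.+2 -> size r = (n - k)%N ->
  word (u ++ r) = word (v ++ r).
Proof.
move=> uv size_u size_r.
apply: (swap_invariant_perm (f := fun u => word (u ++ r))) uv size_u.
apply: swap_invariant_rot => [x s size_s | t a b size_t]; cbv beta.
  by rewrite cat_rcons word_jump_k1.
rewrite -!catA -word_jump_k //.
have := word_jump_k1 a (ys := t ++ [:: b]) (r := r); rewrite -!catA => -> //.
by rewrite size_cat size_t addn1.
Qed.

End ExtractLeftFactor.
End Words.

Lemma word_opp (K : fieldType) (A : lmodType K) (mul : A -> A -> A) s :
  associative mul -> word (fun x y => mul y x) s = word mul (rev s).
Proof.
move=> mulA; elim: s => [|x [|y s] IH] //.
rewrite -[LHS]/(word _ (mul y x :: s)) (word_cons_mul (opp_associative mulA)).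
by rewrite IH !rev_cons; case: (rev s) => [|z r] //=; rewrite !foldl_rcons.
Qed.

Lemma nth_cat_size (T : Type) (x0 : T) p c q : nth x0 (p ++ c :: q) (size p) = c.
Proof. by rewrite nth_cat ltnn subnn. Qed.

Lemma nth_cat_cons (T : Type) (x0 : T) p c d q i : i != size p ->
  nth x0 (p ++ c :: q) i = nth x0 (p ++ d :: q) i.
Proof.
move=> ne_ip; rewrite !nth_cat; case: ltnP => // le_pi.
by case: (i - size p) (subn_eq0 i (size p)) => //; lia.
Qed.

Lemma map_nth_enum_ord (T : Type) (x0 : T) (s : seq T) N :
  size s = N -> [seq nth x0 s i | i : 'I_N <- enum 'I_N] = s.
Proof.
by move=> <-; rewrite (map_comp (nth x0 s) val) val_enum_ord; exact: mkseq_nth.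
Qed.

Lemma mem_take_enum_ord N c (i : 'I_N) :
  (c <= N)%N -> (i \in take c (enum 'I_N)) = (i < c)%N.
Proof.
move=> le_cN; rewrite -(mem_map val_inj) map_take val_enum_ord take_iota mem_iota.
by rewrite (minn_idPl le_cN).
Qed.

Lemma mem_drop_enum_ord N c (i : 'I_N) :
  (c <= N)%N -> (i \in drop c (enum 'I_N)) = (c <= i)%N.
Proof.
move=> le_cN; rewrite -(mem_map val_inj) map_drop val_enum_ord drop_iota mem_iota.
by rewrite add0n subnKC // ltn_ord andbT.
Qed.

Lemma perm_eq_map_supp (T : finType) (s : {perm T}) (S : seq T) :
  uniq S -> (forall x, x \notin S -> s x = x) -> perm_eq (map s S) S.
Proof.
move=> uniq_S s_fix.
have s_on : perm_on [set x in S] s.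
  by apply/subsetP => x; rewrite !inE; apply: contraR => /s_fix ->; rewrite eqxx.
apply: uniq_perm => [|//|x]; first by rewrite (map_inj_uniq (@perm_inj _ s)).
rewrite -[x](permKV s) (mem_map (@perm_inj _ s)).
by have := perm_closed (s^-1 x)%g s_on; rewrite !inE => ->.
Qed.

Definition rev_perm N (s : 'S_N) : 'S_N :=
  let r := perm (@rev_ord_inj N) in (r * s * r)%g.

Lemma rev_permE N (s : 'S_N) i : rev_perm s i = rev_ord (s (rev_ord i)).
Proof. by rewrite !permM !permE. Qed.

Lemma rev_permK N : involutive (@rev_perm N).
Proof. by move=> s; apply/permP => i; rewrite !rev_permE !rev_ordK. Qed.

Lemma rev_map_enum_ord (T : Type) N (f : 'I_N -> T) :
  rev [seq f i | i <- enum 'I_N] = [seq f (rev_ord i) | i <- enum 'I_N].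
Proof.
have rev_enum : rev (enum 'I_N) = map (@rev_ord N) (enum 'I_N).
  apply: (inj_map val_inj); rewrite map_rev val_enum_ord -map_comp.
  apply: (@eq_from_nth _ 0%N) => [|i].
    by rewrite size_rev size_iota size_map size_enum_ord.
  rewrite size_rev size_iota => lt_iN.
  rewrite nth_rev size_iota // nth_iota; last by lia.
  by rewrite (nth_map (Ordinal lt_iN)) ?size_enum_ord //= nth_enum_ord.
by rewrite -map_rev rev_enum -map_comp.
Qed.

Section SatisfiesPerm.
Variables (K : fieldType) (A : lmodType K) (mul : A -> A -> A).
Hypothesis mulA : associative mul.

Lemma satisfies_perm_opp N (s : 'S_N) :
  satisfies_perm mul s -> satisfies_perm (fun x y => mul y x) (rev_perm s).
Proof.
move=> sat a; rewrite !(word_opp (mul := mul)) // !rev_map_enum_ord.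
rewrite (sat (a \o @rev_ord N)).
by congr word; apply: eq_map => i /=; rewrite rev_permE rev_ordK.
Qed.

Lemma satisfies_perm_extracts n (sigma : 'S_n.+1) :
  satisfies_perm mul sigma -> extracts_left_factor mul n.+1 (sigma ord0).
Proof.
move=> sat p c q z size_p size_n.
have size_z : size (p ++ mul z c :: q) = n.+1 by rewrite -size_n !size_cat.
have word_head s : size s = n.+1 ->
    word mul s = word mul (nth c s (sigma ord0) ::
                           [seq nth c s (sigma (lift ord0 i)) | i <- enum 'I_n]).
  move=> size_s; rewrite -[in LHS](map_nth_enum_ord c size_s) sat.
  by rewrite enum_ordSl /= -map_comp.
rewrite (word_head _ size_z) (word_head _ size_n) -size_p !nth_cat_size word_cons_mul //.
congr (mul z (word mul (c :: _))); apply: eq_map => i; apply: nth_cat_cons.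
by rewrite size_p (inj_eq val_inj) (inj_eq perm_inj) eq_sym neq_lift.
Qed.

Lemma satisfies_perm_prefix n (sigma : 'S_n.+1) (tau : 'S_n.+3) :
  satisfies_perm mul sigma -> sigma ord0 != ord0 ->
  (forall m : 'I_n.+3, ~~ (m <= (sigma ord0).+1)%N -> tau m = m) ->
  satisfies_perm mul tau.
Proof.
move=> sat sigma0 tau_fix a; set k := nat_of_ord (sigma ord0).
have k_gt0 : (0 < k)%N.
  by rewrite lt0n; apply: contra sigma0 => /eqP k0; apply/eqP/val_inj.
have le_k2 : (k.+2 <= n.+3)%N by have := ltn_ord (sigma ord0); lia.
rewrite -(cat_take_drop k.+2 (enum 'I_n.+3)) !map_cat.
have -> : [seq a (tau m) | m <- drop k.+2 (enum 'I_n.+3)] =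
          [seq a m | m <- drop k.+2 (enum 'I_n.+3)].
  apply/eq_in_map => m; rewrite mem_drop_enum_ord // => le_m.
  by rewrite tau_fix // -ltnNge.
apply: (word_perm_prefix mulA k_gt0 (ltn_ord (sigma ord0)) (satisfies_perm_extracts sat)).
- rewrite (map_comp a tau); apply: perm_map; rewrite perm_sym.
  apply: perm_eq_map_supp => [|m]; first exact/take_uniq/enum_uniq.
  by rewrite mem_take_enum_ord //; apply: tau_fix.
- by rewrite size_map size_takel ?size_enum_ord.
- by rewrite size_map size_drop size_enum_ord subSS.
Qed.

End SatisfiesPerm.

Local Open Scope ring_scope.

Theorem lemma2p10 (K : fieldType) (A : lmodType K) (mul : A -> A -> A)
    (n : nat) (sigma : 'S_n) (first last : 'I_n) :
  assoc_algebra mul ->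
  nat_of_ord first = 0%N -> nat_of_ord last = n.-1 ->
  satisfies_perm mul sigma ->
  sigma first != first -> sigma last != last ->
  (forall tau : 'S_(n.+2),
     (forall m : 'I_(n.+2), ~~ (m <= (sigma first).+1)%N -> tau m = m) ->
     in_H mul tau) /\
  (forall tau : 'S_(n.+2),
     (forall m : 'I_(n.+2), ~~ ((sigma last).+1 <= m)%N -> tau m = m) ->
     in_H mul tau).
Proof.
case=> mulA _ _; case: n sigma first last => [|n] sigma first last; first by case: first.
move=> /(@val_inj _ _ _ first ord0) -> /(@val_inj _ _ _ last ord_max) ->.
move=> sat moved0 movedN.
have rev_ord0 : rev_ord ord0 = ord_max :> 'I_n.+1 by apply: val_inj; rewrite /= subn1.
split=> tau tau_fix; first exact: (satisfies_perm_prefix mulA sat moved0 tau_fix).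
rewrite -[tau]rev_permK; apply: (satisfies_perm_opp (opp_associative mulA)).
apply: (satisfies_perm_prefix (opp_associative mulA) (satisfies_perm_opp mulA sat)).
  rewrite rev_permE rev_ord0; apply: contra movedN => /eqP moved.
  by rewrite -[sigma _]rev_ordK moved rev_ord0.
move=> m; rewrite !rev_permE rev_ord0 => m_gt; rewrite tau_fix ?rev_ordK //=.
by move: m_gt; have := ltn_ord (sigma ord_max); have := ltn_ord m; rewrite /=; lia.
Qed.
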